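(* Let $X$, $Y$ be real Banach spaces, $\Omega$ a measure space, $Z:=L^2(\Omega)$, and $e:Y\to Z$ a linear continuous dense embedding. Let $f:X\to\mathbb{R}$ and $g:X\to Y$ be continuously Fréchet differentiable. Let $x\in X$ be a feasible point ($g(x)\le 0$) satisfying the AKKT conditions, with sequences $x^k\to x$ in $X$ and $(\lambda^k)\subset K_Y^+$ such that $f'(x^k)+g'(x^k)^*\lambda^k\to 0$ and $\langle\lambda^k,g_-(x^k)\rangle\to 0$. Then: (a) if the Zowe–Kurcyusz condition $g'(x)X+\operatorname{cone}(K_Y+g(x))=Y$ holds at $x$, then $(\lambda^k)$ is bounded in $Y^*$; (b) if moreover the map $y\mapsto|y|$ is well-defined and continuous on $Y$, the closed unit ball of $Y^*$ is weak-$*$ sequentially compact, and $(\lambda^k)$ is bounded in $Y^*$, then $x$ is a KKT point, i.e. there exists $\lambda\in K_Y^+$ with $f'(x)+g'(x)^*\lambda=0$, $g(x)\le 0$ and $\langle\lambda,g(x)\rangle=0$.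
   Context: The order on $Y$ is induced by $Z$: $K_Y:=\{y\in Y: e(y)\ge 0 \text{ a.e.}\}$, and $y\le 0$ means $-y\in K_Y$. $K_Y^+:=\{\mu\in Y^*:\langle\mu,y\rangle\ge 0\ \forall y\in K_Y\}$, with $\langle\cdot,\cdot\rangle$ the duality pairing of $Y^*$ and $Y$. For $y\in Y$, $|y|$, $y_+=\max\{y,0\}$, $y_-=\max\{-y,0\}$ are defined via the pointwise operations in $Z$ (the statement ''well-defined on $Y$'' means these land in $Y$); $g_-(x):=(g(x))_-$. $\operatorname{cone}(A)$ denotes the conical hull $\{t a: t\ge 0, a\in A\}$ of $A\subseteq Y$. *)

From HB Require Import structures.
From mathcomp Require Import all_boot all_order all_algebra.
From mathcomp Require Import all_classical all_reals all_analysis.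
Set Implicit Arguments. Unset Strict Implicit. Unset Printing Implicit Defensive.
Import Order.TTheory GRing.Theory Num.Theory.
Import numFieldNormedType.Exports.
Local Open Scope classical_set_scope.
Local Open Scope ring_scope.

(* continuously Frechet differentiable: differentiable everywhere and the
   derivative x |-> f'(x) is continuous for the operator norm *)
Definition C1_map {R : realType} {U V : normedModType R} (f : U -> V) :=
  (forall x, differentiable f x) /\
  (forall (x : U) (eps : R), 0 < eps -> exists2 del : R, 0 < del &
     forall x' : U, `|x' - x| < del ->
       forall h : U, `|'d f x' h - 'd f x h| <= eps * `|h|).

Definition is_dual {R : realType} {Y : normedModType R} (m : Y -> R) :=
  (forall (a : R) (y z : Y), m (a *: y + z) = a * m y + m z) /\ continuous m.

(* h is (a representative of) an element of L^2(mu) *)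
Definition L2_elem {R : realType} {d} {T : measurableType d}
  (mu : {measure set T -> \bar R}) (h : T -> R) :=
  measurable_fun setT h /\ (Lnorm mu 2%:E (EFin \o h) < +oo)%E.

Definition dense_L2_embedding {R : realType} {Y : normedModType R} {d}
  {T : measurableType d} (mu : {measure set T -> \bar R}) (e : Y -> T -> R) :=
  [/\ (forall y, L2_elem mu (e y)),
      (forall (a : R) (y z : Y), e (a *: y + z) = (fun t => a * e y t + e z t)),
      (exists C : R, forall y, (Lnorm mu 2%:E (EFin \o e y) <= (C * `|y|)%:E)%E),
      (forall y, {ae mu, forall t, e y t = 0} -> y = 0) &
      (forall h, L2_elem mu h -> forall eps : R, 0 < eps ->
         exists y, (Lnorm mu 2%:E (EFin \o (fun t => (e y t - h t)%R)) < eps%:E)%E)].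

Definition KY {R : realType} {Y : normedModType R} {d} {T : measurableType d}
  (mu : {measure set T -> \bar R}) (e : Y -> T -> R) : set Y :=
  [set y | {ae mu, forall t, 0 <= e y t}].

Definition KYplus {R : realType} {Y : normedModType R} {d} {T : measurableType d}
  (mu : {measure set T -> \bar R}) (e : Y -> T -> R) : set (Y -> R) :=
  [set m | is_dual m /\ forall y, KY mu e y -> 0 <= m y].

Definition is_negpart {R : realType} {Y : normedModType R} {d} {T : measurableType d}
  (mu : {measure set T -> \bar R}) (e : Y -> T -> R) (y w : Y) :=
  {ae mu, forall t, e w t = Num.max (- e y t) 0}.

Definition is_abs {R : realType} {Y : normedModType R} {d} {T : measurableType d}
  (mu : {measure set T -> \bar R}) (e : Y -> T -> R) (y w : Y) :=
  {ae mu, forall t, e w t = `|e y t|}.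

Definition dual_ball_wstar_seq_compact {R : realType} (Y : normedModType R) :=
  forall ms : nat -> Y -> R, (forall n, is_dual (ms n)) ->
    (forall n y, `|ms n y| <= `|y|) ->
    exists phi : nat -> nat, (forall n, (phi n < phi n.+1)%N) /\
      exists m0 : Y -> R, [/\ is_dual m0, (forall y, `|m0 y| <= `|y|) &
        forall y, (fun n => ms (phi n) y) @ \oo --> m0 y].

Definition dual_bounded {R : realType} {Y : normedModType R} (lam : nat -> Y -> R) :=
  exists M : R, forall k y, `|lam k y| <= M * `|y|.

From HB Require Import structures.
From mathcomp Require Import all_boot all_order all_algebra.
From mathcomp Require Import all_classical all_reals all_analysis.
From mathcomp Require Import ring lra.
Set Implicit Arguments. Unset Strict Implicit. Unset Printing Implicit Defensive.
Import Order.TTheory GRing.Theory Num.Theory.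
Import numFieldNormedType.Exports.
Local Open Scope classical_set_scope.
Local Open Scope ring_scope.

(* (a) By the Zowe-Kurcyusz condition every y is g'(x)h + t(q + g(x)) with t >= 0
   and q in K_Y, so the functionals m in K_Y^+ with m(g(x)) >= -a and
   |m(g'(x)h)| <= a|h| are bounded below at each y; Banach-Steinhaus makes the
   bound uniform: ||m|| <= C a.  For large k and ||lam^k|| = N, the AKKT
   conditions give m(g(x)) >= -(1 + N) eps (from <lam^k, g(x^k) + g_-(x^k)> >= 0)
   and |f'(x)h + lam^k(g'(x)h)| <= (2 + N) eps |h|, so lam^k qualifies with
   a = ||f'(x)|| + (2 + N) eps, and C eps = 1/2 turns ||m|| <= C a into a bound
   on N.
   (b) A weak-* limit lam of a subsequence lies in K_Y^+, and passing to the limit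
   in the same two estimates and letting eps -> 0 gives f'(x) + g'(x)^* lam = 0
   and <lam, g(x)> >= 0; the reverse inequality is g(x) <= 0. *)

Lemma linear_lipschitz (R : realType) (V W : normedModType R) (L : {linear V -> W}) :
  continuous L -> exists2 c, 0 < c & forall v, `|L v| <= c * `|v|.
Proof.
move=> cL; have /linear_boundedP := continuous_linear_bounded 0 (cL 0).
exact: pinfty_ex_gt0.
Qed.

Section dual_functional.
Variables (R : realType) (Y : normedModType R) (m : Y -> R).
Hypothesis hm : is_dual m.

Lemma dual_linear : linear m.
Proof. by move=> a u v; rewrite hm.1. Qed.

Let mL : {linear Y -> R} := HB.pack m (GRing.isLinear.Build _ _ _ _ m dual_linear).

Lemma dualD y z : m (y + z) = m y + m z.
Proof. exact: (raddfD mL). Qed.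

Lemma dualB y z : m (y - z) = m y - m z.
Proof. exact: (raddfB mL). Qed.

Lemma dualN y : m (- y) = - m y.
Proof. exact: (raddfN mL). Qed.

Lemma dual0 : m 0 = 0.
Proof. exact: (raddf0 mL). Qed.

Lemma dualZ a y : m (a *: y) = a * m y.
Proof. by have := hm.1 a y 0; rewrite addr0 dual0 addr0. Qed.

Lemma dual_scale c : is_dual (fun y => c * m y).
Proof.
split=> [a y z|y]; first by rewrite hm.1; ring.
by apply: cvgM; [exact: cvg_cst | exact: hm.2].
Qed.

Lemma dual_lipschitz : exists2 c, 0 < c & forall y, `|m y| <= c * `|y|.
Proof. exact: (@linear_lipschitz _ _ _ mL hm.2). Qed.

Lemma dual_opnorm : exists N, [/\ 0 <= N, forall y, `|m y| <= N * `|y| &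
  forall N', 0 <= N' -> (forall y, `|m y| <= N' * `|y|) -> N <= N'].
Proof.
pose V := [set N : R | 0 <= N /\ forall y, `|m y| <= N * `|y|].
have [c c0 hc] := dual_lipschitz.
have lbV : lbound V 0 by move=> N [].
have V0 : V !=set0 by exists c; split; [exact: ltW|].
exists (inf V); split.
- exact: lb_le_inf.
- move=> y; have [->|y0] := eqVneq y 0; first by rewrite dual0 !normr0 mulr0.
  have ny : 0 < `|y| by rewrite normr_gt0.
  rewrite -ler_pdivrMr //; apply: lb_le_inf => // N [_ HN].
  by rewrite ler_pdivrMr.
- by move=> N' N'0 HN'; apply: ge_inf; [exists 0 | split].
Qed.

Lemma dual_le_of_ball C : (forall y, `|y| <= 1 -> `|m y| <= C) ->
  forall y, `|m y| <= C * `|y|.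
Proof.
move=> hC y; have [->|y0] := eqVneq y 0.
  by rewrite dual0 !normr0 mulr0.
have ny : 0 < `|y| by rewrite normr_gt0.
have := hC (`|y|^-1 *: y).
rewrite normrZ normfV normr_id mulVf ?gt_eqF // lexx dualZ normrM normfV normr_id.
by rewrite ler_pdivrMl // mulrC => ->.
Qed.

End dual_functional.

Section cone_dual_bound.
Variables (R : realType) (X : normedModType R) (Y : completeNormedModType R).
Variables (K : set Y) (A : X -> Y) (y0 : Y).
Hypothesis AK_onto : forall y, exists (h : X) (t : R) (q : Y),
  [/\ 0 <= t, K q & y = A h + t *: (q + y0)].

Let normalized (m : Y -> R) := [/\ is_dual m, forall q, K q -> 0 <= m q,
  -1 <= m y0 & forall h, `|m (A h)| <= `|h|].

Let normalized_lower_bound y :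
  exists2 c, 0 <= c & forall m, normalized m -> - c <= m y.
Proof.
have [h [t [q [t0 Kq ->]]]] := AK_onto y.
exists (`|h| + t); first by rewrite addr_ge0.
move=> m [hm Kpos my0 mA]; rewrite (dualD hm) (dualZ hm) (dualD hm).
have := Kpos q Kq; have := mA h; rewrite ler_norml => /andP[mAh _] mq.
nra.
Qed.

Let normalized_pointwise_bounded : pointwise_bounded normalized.
Proof.
move=> y; have [c1 c10 hc1] := normalized_lower_bound y.
have [c2 c20 hc2] := normalized_lower_bound (- y).
exists (c1 + c2) => m nm; have := hc1 m nm; have := hc2 m nm.
case: (nm) => hm _ _ _; rewrite (dualN hm) ler_norml; lra.
Qed.

Lemma cone_dual_bound : exists2 C, 0 < C & forall (m : Y -> R) (a : R),
  is_dual m -> (forall q, K q -> 0 <= m q) -> 0 < a -> - a <= m y0 ->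
  (forall h, `|m (A h)| <= a * `|h|) -> forall y, `|m y| <= C * a * `|y|.
Proof.
have [|M HM] := @Banach_Steinhauss R Y R normalized _ normalized_pointwise_bounded 1.
  move=> m [hm _ _ _]; split; last exact: dual_linear.
  have [c c0 hc] := dual_lipschitz hm; move=> r; exists (c * r) => y yr.
  by apply: le_trans (hc y) _; rewrite ler_wpM2l // ltW.
exists (`|M| + 1); first by rewrite ltr_pwDr // normr_ge0.
move=> m a hm Kpos a0 my0 mA y.
have nm : normalized (fun y => a^-1 * m y).
  split=> [|q Kq||h]; first exact: dual_scale.
  - by rewrite mulr_ge0 ?invr_ge0 ?(ltW a0) ?Kpos.
  - by rewrite mulrC ler_pdivlMr // mulN1r.
  - by rewrite normrM gtr0_norm ?invr_gt0 // mulrC ler_pdivrMr // mulrC mA.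
have := dual_le_of_ball (dual_scale hm a^-1) (HM _ nm) y.
rewrite normrM gtr0_norm ?invr_gt0 // mulrC ler_pdivrMr // => hy.
apply: le_trans hy _; rewrite mulrAC ler_wpM2r ?normr_ge0 // ler_wpM2r ?ltW //.
have := ler_norm M; lra.
Qed.

End cone_dual_bound.

Lemma le0_of_le_eps_mul (R : realFieldType) (z c : R) :
  0 <= c -> (forall eps, 0 < eps -> z <= eps * c) -> z <= 0.
Proof.
move=> c0 hz; apply/ler_addgt0Pr => eps eps0; rewrite add0r.
have c1 : 0 < c + 1 by lra.
apply: le_trans (hz (eps / (c + 1)) (divr_gt0 eps0 c1)) _.
by rewrite mulrAC ler_pdivrMr // ler_wpM2l ?(ltW eps0) //; lra.
Qed.

Lemma leq_strict_mono (phi : nat -> nat) :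
  (forall n, (phi n < phi n.+1)%N) -> forall n, (n <= phi n)%N.
Proof. by move=> hphi; elim=> [|n IH] //; exact: leq_ltn_trans IH (hphi n). Qed.

Lemma near_subseq (P : nat -> Prop) (phi : nat -> nat) :
  (forall n, (phi n < phi n.+1)%N) ->
  (\forall k \near \oo, P k) -> \forall n \near \oo, P (phi n).
Proof.
move=> hphi [N _ HN]; exists N => // n /= Nn; apply: HN.
exact: leq_trans Nn (leq_strict_mono hphi n).
Qed.

Section dual_sequence.
Variables (R : realType) (Y : normedModType R) (lam : nat -> Y -> R).
Hypothesis hlam : forall k, is_dual (lam k).

Lemma dual_boundedP : dual_bounded lam ->
  exists2 M, 0 < M & forall k y, `|lam k y| <= M * `|y|.
Proof.
move=> [M HM]; exists (`|M| + 1); first by rewrite ltr_pwDr // normr_ge0.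
move=> k y; apply: le_trans (HM k y) _; rewrite ler_wpM2r //.
by have := ler_norm M; lra.
Qed.

Lemma dual_bounded_near (B : R) :
  (\forall k \near \oo, forall y, `|lam k y| <= B * `|y|) -> dual_bounded lam.
Proof.
move=> [N _ HN].
have [M [M0 HM]] : exists M, 0 <= M /\
    forall k, (k < N)%N -> forall y, `|lam k y| <= M * `|y|.
  elim: N {HN} => [|n [M [M0 HM]]]; first by exists 0.
  have [c c0 hc] := dual_lipschitz (hlam n).
  exists (M + c); split=> [|k]; first by rewrite addr_ge0 // ltW.
  rewrite ltnS leq_eqVlt => /orP[/eqP -> | kn] y.
    by apply: le_trans (hc y) _; rewrite ler_wpM2r // lerDr.
  by apply: le_trans (HM k kn y) _; rewrite ler_wpM2r // lerDl ltW.
exists (M + `|B|) => k y; have [kN|Nk] := ltnP k N.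
  by apply: le_trans (HM k kN y) _; rewrite ler_wpM2r // lerDl.
apply: le_trans (HN k Nk y) _; rewrite ler_wpM2r //.
by have := ler_norm B; lra.
Qed.

Lemma dual_bounded_wstar_subseq : dual_ball_wstar_seq_compact Y ->
  dual_bounded lam -> exists phi : nat -> nat, (forall n, (phi n < phi n.+1)%N) /\
    exists2 l, is_dual l & forall y, (fun n => lam (phi n) y) @ \oo --> l y.
Proof.
move=> wc /dual_boundedP[M M0 HM].
have ball n y : `|M^-1 * lam n y| <= `|y|.
  by rewrite normrM gtr0_norm ?invr_gt0 // mulrC ler_pdivrMr // mulrC HM.
have [phi [hphi [l0 [hl0 _ hcvg]]]] := wc _ (fun n => dual_scale (hlam n) M^-1) ball.
exists phi; split=> //; exists (fun y => M * l0 y); first exact: dual_scale.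
move=> y; have -> : (fun n => lam (phi n) y) = (fun n => M * (M^-1 * lam (phi n) y)).
  by apply: funext => n; rewrite mulrA mulfV ?gt_eqF // mul1r.
by apply: cvgM; [exact: cvg_cst | exact: hcvg].
Qed.

End dual_sequence.

Lemma KY_add_negpart (R : realType) (Y : normedModType R) (d : measure_display)
  (T : measurableType d) (mu : {measure set T -> \bar R}) (e : Y -> T -> R) (y w : Y) :
  (forall y z t, e (y + z) t = e y t + e z t) ->
  is_negpart mu e y w -> KY mu e (y + w).
Proof.
move=> eD; apply: filterS => t; rewrite eD => ->.
have : - e y t <= Num.max (- e y t) 0 by rewrite le_max lexx.
have : 0 <= Num.max (- e y t) 0 by rewrite le_max lexx orbT.
lra.
Qed.

Lemma dense_L2_embeddingD (R : realType) (Y : normedModType R) (d : measure_display)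
  (T : measurableType d) (mu : {measure set T -> \bar R}) (e : Y -> T -> R) :
  dense_L2_embedding mu e -> forall y z t, e (y + z) t = e y t + e z t.
Proof.
by move=> [_ elin _ _ _] y z t; have := elin 1 y z; rewrite scale1r => ->; rewrite mul1r.
Qed.

Section akkt_sequence.
Variables (R : realType) (X Y : normedModType R).
Variables (d : measure_display) (T : measurableType d) (mu : {measure set T -> \bar R}).
Variables (e : Y -> T -> R) (f : X -> R) (g : X -> Y).
Variables (x : X) (xk : nat -> X) (lam : nat -> Y -> R) (w : nat -> Y).
Hypothesis eD : forall y z t, e (y + z) t = e y t + e z t.
Hypothesis Cf : C1_map f.
Hypothesis Cg : C1_map g.
Hypothesis xk_cvg : xk @ \oo --> x.
Hypothesis lam_dual : forall k, KYplus mu e (lam k).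
Hypothesis stationary : forall eps : R, 0 < eps -> \forall k \near \oo,
  forall h : X, `|'d f (xk k) h + lam k ('d g (xk k) h)| <= eps * `|h|.
Hypothesis w_negpart : forall k, is_negpart mu e (g (xk k)) (w k).
Hypothesis complementary : (fun k => lam k (w k)) @ \oo --> (0 : R).

Lemma feasibility_near eps : 0 < eps -> \forall k \near \oo,
  forall N, 0 <= N -> (forall y, `|lam k y| <= N * `|y|) ->
  - ((1 + N) * eps) <= lam k (g x).
Proof.
move=> eps0.
have gxk : \forall k \near \oo, `|g x - g (xk k)| <= eps.
  have /cvgrPdist_le /(_ eps eps0) := differentiable_continuous (Cg.1 x).
  exact: xk_cvg.
have wk : \forall k \near \oo, lam k (w k) <= eps.
  move: complementary => /cvgrPdist_le /(_ eps eps0); apply: filterS => k.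
  by rewrite sub0r normrN ler_norml => /andP[].
near=> k => N N0 hN.
have hd := (lam_dual k).1.
have := (lam_dual k).2 _ (KY_add_negpart eD (w_negpart k)); rewrite (dualD hd).
have := hN (g x - g (xk k)); rewrite (dualB hd) ler_norml => /andP[lo _].
have : N * `|g x - g (xk k)| <= N * eps by rewrite ler_wpM2l //; near: k.
have : lam k (w k) <= eps by near: k.
nra.
Unshelve. all: by end_near. Qed.

Lemma stationarity_near eps : 0 < eps -> \forall k \near \oo,
  forall N, 0 <= N -> (forall y, `|lam k y| <= N * `|y|) ->
  forall h, `|'d f x h + lam k ('d g x h)| <= (2 + N) * eps * `|h|.
Proof.
move=> eps0.
have [df df0 Hdf] := Cf.2 x eps eps0.
have [dg dg0 Hdg] := Cg.2 x eps eps0.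
have xk_near r : 0 < r -> \forall k \near \oo, `|xk k - x| < r.
  move=> r0; move: xk_cvg => /cvgrPdist_lt /(_ r r0).
  by apply: filterS => k; rewrite distrC.
near=> k.
have xkf : `|xk k - x| < df by near: k; exact: xk_near.
have xkg : `|xk k - x| < dg by near: k; exact: xk_near.
have stat_k : forall h, `|'d f (xk k) h + lam k ('d g (xk k) h)| <= eps * `|h|.
  by near: k; exact: stationary.
move=> N N0 hN h; have hd := (lam_dual k).1.
have -> : 'd f x h + lam k ('d g x h) =
    ('d f (xk k) h + lam k ('d g (xk k) h)) - ('d f (xk k) h - 'd f x h)
    + lam k ('d g x h - 'd g (xk k) h).
  by rewrite (dualB hd); ring.
apply: le_trans (ler_normD _ _) _; apply: le_trans (lerD (ler_normB _ _) (hN _)) _.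
have : N * `|'d g x h - 'd g (xk k) h| <= N * (eps * `|h|).
  by rewrite ler_wpM2l // distrC Hdg.
have := stat_k h; have := Hdf _ xkf h; lra.
Unshelve. all: by end_near. Qed.

Lemma akkt_dual_bounded : (exists2 C, 0 < C & forall (m : Y -> R) (a : R),
    is_dual m -> (forall q, KY mu e q -> 0 <= m q) -> 0 < a -> - a <= m (g x) ->
    (forall h, `|m ('d g x h)| <= a * `|h|) -> forall y, `|m y| <= C * a * `|y|) ->
  dual_bounded lam.
Proof.
move=> [C C0 HC].
have [cf cf0 hcf] := linear_lipschitz (diff_continuous (Cf.1 x)).
pose eps := (2 * C)^-1.
have eps0 : 0 < eps by rewrite invr_gt0 mulr_gt0.
have Ceps : C * eps = 2^-1 by rewrite /eps invfM mulrCA mulfV ?gt_eqF // mulr1.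
apply: (@dual_bounded_near _ _ _ (fun k => (lam_dual k).1) (2 * (C * cf + 1))).
apply: filterS2 (feasibility_near eps0) (stationarity_near eps0) => k feas_k stat_k y.
have [N [N0 hN Nmin]] := dual_opnorm (lam_dual k).1.
pose a := cf + (2 + N) * eps.
have a0 : 0 < a by rewrite /a ltr_pwDl // mulr_ge0 // ?ltW //; lra.
have la : - a <= lam k (g x).
  by apply: le_trans (feas_k N N0 hN); rewrite lerN2 /a; nra.
have lA h : `|lam k ('d g x h)| <= a * `|h|.
  rewrite (_ : lam k _ = ('d f x h + lam k ('d g x h)) - 'd f x h); last by ring.
  apply: le_trans (ler_normB _ _) _.
  have := stat_k N N0 hN h; have := hcf h; rewrite /a; lra.
have : N <= C * a.
  apply: Nmin; first by rewrite mulr_ge0 ?ltW.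
  exact: HC (lam_dual k).1 (lam_dual k).2 a0 la lA.
have -> : C * a = C * cf + (2 + N) * (C * eps) by rewrite /a; ring.
rewrite Ceps => Na; apply: le_trans (hN y) _; rewrite ler_wpM2r //; lra.
Qed.

Lemma akkt_limit_kkt (phi : nat -> nat) (l : Y -> R) :
  (forall n, (phi n < phi n.+1)%N) -> is_dual l ->
  (forall y, (fun n => lam (phi n) y) @ \oo --> l y) ->
  dual_bounded lam -> KY mu e (- g x) ->
  [/\ KYplus mu e l, forall h, 'd f x h + l ('d g x h) = 0 & l (g x) = 0].
Proof.
move=> hphi hl lam_cvg /dual_boundedP[M M0 HM] Kgx.
have lK : KYplus mu e l.
  split=> // y Ky; apply: (ler_cvg_to (cvg_cst 0) (lam_cvg y)).
  by apply: nearW => n; exact: (lam_dual _).2.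
split=> // [h|].
  apply/eqP; rewrite -normr_le0.
  apply: (@le0_of_le_eps_mul _ _ ((2 + M) * `|h|)) => [|eps eps0].
    by rewrite mulr_ge0 // addr_ge0 // ltW.
  apply: (ler_cvg_to (cvg_norm (cvgD (cvg_cst _) (lam_cvg _))) (cvg_cst _)).
  apply: filterS (near_subseq hphi (stationarity_near eps0)) => n stat_n.
  by rewrite mulrCA mulrA stat_n // ltW.
apply: le_anti; apply/andP; split.
  by have := lK.2 _ Kgx; rewrite (dualN hl) oppr_ge0.
rewrite -oppr_le0; apply: (@le0_of_le_eps_mul _ _ (1 + M)) => [|eps eps0].
  by rewrite addr_ge0 // ltW.
rewrite lerNl; apply: (ler_cvg_to (cvg_cst _) (lam_cvg _)).
apply: filterS (near_subseq hphi (feasibility_near eps0)) => n feas_n.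
by rewrite mulrC feas_n // ltW.
Qed.

End akkt_sequence.

Theorem theorem5p5 (R : realType) (X Y : completeNormedModType R)
  (d : measure_display) (T : measurableType d) (mu : {measure set T -> \bar R})
  (e : Y -> T -> R) (f : X -> R) (g : X -> Y)
  (x : X) (xk : nat -> X) (lam : nat -> Y -> R) (w : nat -> Y) :
  dense_L2_embedding mu e ->
  C1_map f -> C1_map g ->
  KY mu e (- g x) ->
  xk @ \oo --> x ->
  (forall k, KYplus mu e (lam k)) ->
  (forall eps : R, 0 < eps -> \forall k \near \oo,
     forall h : X, `|'d f (xk k) h + lam k ('d g (xk k) h)| <= eps * `|h|) ->
  (forall k, is_negpart mu e (g (xk k)) (w k)) ->
  (fun k => lam k (w k)) @ \oo --> (0 : R) ->
  ((forall y : Y, exists (h : X) (t : R) (q : Y),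
       [/\ 0 <= t, KY mu e q & y = 'd g x h + t *: (q + g x)]) ->
     dual_bounded lam)
  /\
  ((exists2 ab : Y -> Y, (forall y, is_abs mu e y (ab y)) & continuous ab) ->
   dual_ball_wstar_seq_compact Y ->
   dual_bounded lam ->
   exists2 l : Y -> R, KYplus mu e l &
     [/\ forall h : X, 'd f x h + l ('d g x h) = 0,
         KY mu e (- g x) & l (g x) = 0]).
Proof.
move=> emb Cf Cg Kgx xk_cvg lam_dual stationary w_negpart complementary.
have eD := dense_L2_embeddingD emb.
split=> [ZK | _ wc lam_bounded].
  apply: (akkt_dual_bounded eD Cf Cg xk_cvg lam_dual stationary w_negpart complementary).
  exact: cone_dual_bound ZK.
have [phi [hphi [l hl lam_cvg]]] :=
  dual_bounded_wstar_subseq (fun k => (lam_dual k).1) wc lam_bounded.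
have [lK kkt_stat kkt_compl] := akkt_limit_kkt eD Cf Cg xk_cvg lam_dual stationary
  w_negpart complementary hphi hl lam_cvg lam_bounded Kgx.
by exists l.
Qed.
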